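(* A real $4\times4$ array $(c_{i,j})_{0\le i,j\le3}$ satisfies the fourteen equations (E0), (R1)–(R9), (O1)–(O4) if and only if there exist real numbers $p=c_{3,2}$, $q=c_{3,3}$, a choice $\mu\in\{\mu_1,\mu_2\}$, a sign $\sigma\in\{+1,-1\}$ and a type $T\in\{A,B\}$ such that the corresponding discriminant is nonnegative and the entries are given as follows. Type A: with $\Delta=\Delta_1$ if $\mu=\mu_1$ and $\Delta=\Delta_2$ if $\mu=\mu_2$ (and $\Delta\ge0$), $c_{2,3}=\tfrac14+2\mu-\tfrac12(p+q)+\tfrac{\sigma}{8}\sqrt{\Delta}$, $c_{2,2}=\tfrac34+4\mu-p-q-c_{2,3}$, $c_{3,1}=\mu-q$, $c_{1,3}=c_{3,1}$. Type B: with $\Delta_3\ge0$, $c_{2,3}=-\tfrac12(p+q)+\tfrac{\sigma}{8}\sqrt{\Delta_3}$, $c_{2,2}=\tfrac14-p-q-c_{2,3}$, $c_{3,1}=\mu-q$, $c_{1,3}=\tfrac12-2q-c_{3,1}$. In both types the remaining ten entries are $c_{0,0}=-c_{3,1}-2c_{3,3}-c_{1,3}+c_{2,2}$, $c_{0,1}=-c_{3,1}-2c_{3,3}+\tfrac12+c_{2,3}-c_{1,3}$, $c_{0,2}=c_{1,3}+c_{3,3}+\tfrac12-c_{2,2}$, $c_{0,3}=c_{3,3}-c_{2,3}+c_{1,3}$, $c_{1,0}=-c_{3,1}-2c_{3,3}+c_{3,2}-c_{1,3}+\tfrac12$, $c_{1,1}=1-c_{1,3}-c_{3,1}-c_{3,3}$,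 $c_{1,2}=-c_{3,2}+c_{1,3}+c_{3,3}+\tfrac12$, $c_{2,0}=c_{3,1}+c_{3,3}-c_{2,2}+\tfrac12$, $c_{2,1}=c_{3,1}+c_{3,3}+\tfrac12-c_{2,3}$, $c_{3,0}=c_{3,1}+c_{3,3}-c_{3,2}$.
   Context: $\mu_1=\frac{1+\sqrt3}{4}$, $\mu_2=\frac{1-\sqrt3}{4}$, and with $p=c_{3,2}$, $q=c_{3,3}$: $\Delta_1=-34-20\sqrt3+32\sqrt3\,q+32\sqrt3\,p-48q^2+32q-32pq+48p-48p^2$; $\Delta_2=-34+20\sqrt3-32\sqrt3\,q-32\sqrt3\,p-48q^2+32q-32pq+48p-48p^2$; $\Delta_3=-48p^2-32pq-48q^2+2-16q$. (E0): $\sum_{i=0}^3\sum_{j=0}^3 c_{i,j}=4$. Regularity equations: (R1) $c_{0,1}+c_{0,3}+c_{2,1}+c_{2,3}=c_{0,0}+c_{0,2}+c_{2,0}+c_{2,2}$; (R2) $c_{1,1}+c_{1,3}+c_{3,1}+c_{3,3}=c_{0,0}+c_{0,2}+c_{2,0}+c_{2,2}$; (R3) $c_{1,0}+c_{1,2}+c_{3,0}+c_{3,2}=c_{0,0}+c_{0,2}+c_{2,0}+c_{2,2}$; (R4) $c_{2,1}+c_{2,3}=c_{2,0}+c_{2,2}$; (R5) $c_{1,1}+c_{1,3}+3c_{3,1}+3c_{3,3}=2c_{2,0}+2c_{2,2}$; (R6) $c_{1,0}+c_{1,2}+3c_{3,0}+3c_{3,2}=2c_{2,0}+2c_{2,2}$;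 (R7) $c_{0,1}+c_{2,1}+3c_{0,3}+3c_{2,3}=2c_{0,2}+2c_{2,2}$; (R8) $c_{1,1}+c_{3,1}+3c_{1,3}+3c_{3,3}=2c_{0,2}+2c_{2,2}$; (R9) $c_{1,2}+c_{3,2}=c_{0,2}+c_{2,2}$. Orthogonality equations: (O1) $\sum_{i=0}^3\sum_{j=0}^3 c_{i,j}^2=4$; (O2) $c_{3,3}c_{1,1}+c_{3,2}c_{1,0}+c_{2,3}c_{0,1}+c_{2,2}c_{0,0}=0$; (O3) $c_{3,3}c_{1,3}+c_{3,2}c_{1,2}+c_{2,3}c_{0,3}+c_{2,2}c_{0,2}+c_{3,1}c_{1,1}+c_{3,0}c_{1,0}+c_{2,1}c_{0,1}+c_{2,0}c_{0,0}=0$; (O4) $c_{3,3}c_{3,1}+c_{3,2}c_{3,0}+c_{2,3}c_{2,1}+c_{2,2}c_{2,0}+c_{1,3}c_{1,1}+c_{1,2}c_{1,0}+c_{0,3}c_{0,1}+c_{0,2}c_{0,0}=0$. *)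

(* Stdlib reals. A real 4x4 array (c_{i,j})_{0<=i,j<=3} is modelled as
   c : nat -> nat -> R; only the entries with 0 <= i,j <= 3 are ever used. *)
From Stdlib Require Import Reals.
Open Scope R_scope.

Definition mu1 : R := (1 + sqrt 3) / 4.
Definition mu2 : R := (1 - sqrt 3) / 4.

Definition Delta1 (p q : R) : R :=
  -34 - 20 * sqrt 3 + 32 * sqrt 3 * q + 32 * sqrt 3 * p - 48 * q^2 + 32 * q
  - 32 * p * q + 48 * p - 48 * p^2.
Definition Delta2 (p q : R) : R :=
  -34 + 20 * sqrt 3 - 32 * sqrt 3 * q - 32 * sqrt 3 * p - 48 * q^2 + 32 * q
  - 32 * p * q + 48 * p - 48 * p^2.
Definition Delta3 (p q : R) : R :=
  -48 * p^2 - 32 * p * q - 48 * q^2 + 2 - 16 * q.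

Definition sum44 (f : nat -> nat -> R) : R :=
  sum_f_R0 (fun i => sum_f_R0 (fun j => f i j) 3) 3.

Definition system (c : nat -> nat -> R) : Prop :=
  (* E0 *) sum44 c = 4 /\
  (* R1 *) c 0%nat 1%nat + c 0%nat 3%nat + c 2%nat 1%nat + c 2%nat 3%nat
           = c 0%nat 0%nat + c 0%nat 2%nat + c 2%nat 0%nat + c 2%nat 2%nat /\
  (* R2 *) c 1%nat 1%nat + c 1%nat 3%nat + c 3%nat 1%nat + c 3%nat 3%nat
           = c 0%nat 0%nat + c 0%nat 2%nat + c 2%nat 0%nat + c 2%nat 2%nat /\
  (* R3 *) c 1%nat 0%nat + c 1%nat 2%nat + c 3%nat 0%nat + c 3%nat 2%nat
           = c 0%nat 0%nat + c 0%nat 2%nat + c 2%nat 0%nat + c 2%nat 2%nat /\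
  (* R4 *) c 2%nat 1%nat + c 2%nat 3%nat = c 2%nat 0%nat + c 2%nat 2%nat /\
  (* R5 *) c 1%nat 1%nat + c 1%nat 3%nat + 3 * c 3%nat 1%nat + 3 * c 3%nat 3%nat
           = 2 * c 2%nat 0%nat + 2 * c 2%nat 2%nat /\
  (* R6 *) c 1%nat 0%nat + c 1%nat 2%nat + 3 * c 3%nat 0%nat + 3 * c 3%nat 2%nat
           = 2 * c 2%nat 0%nat + 2 * c 2%nat 2%nat /\
  (* R7 *) c 0%nat 1%nat + c 2%nat 1%nat + 3 * c 0%nat 3%nat + 3 * c 2%nat 3%nat
           = 2 * c 0%nat 2%nat + 2 * c 2%nat 2%nat /\
  (* R8 *) c 1%nat 1%nat + c 3%nat 1%nat + 3 * c 1%nat 3%nat + 3 * c 3%nat 3%nat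
           = 2 * c 0%nat 2%nat + 2 * c 2%nat 2%nat /\
  (* R9 *) c 1%nat 2%nat + c 3%nat 2%nat = c 0%nat 2%nat + c 2%nat 2%nat /\
  (* O1 *) sum44 (fun i j => (c i j)^2) = 4 /\
  (* O2 *) c 3%nat 3%nat * c 1%nat 1%nat + c 3%nat 2%nat * c 1%nat 0%nat
           + c 2%nat 3%nat * c 0%nat 1%nat + c 2%nat 2%nat * c 0%nat 0%nat = 0 /\
  (* O3 *) c 3%nat 3%nat * c 1%nat 3%nat + c 3%nat 2%nat * c 1%nat 2%nat
           + c 2%nat 3%nat * c 0%nat 3%nat + c 2%nat 2%nat * c 0%nat 2%nat
           + c 3%nat 1%nat * c 1%nat 1%nat + c 3%nat 0%nat * c 1%nat 0%nat
           + c 2%nat 1%nat * c 0%nat 1%nat + c 2%nat 0%nat * c 0%nat 0%nat = 0 /\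
  (* O4 *) c 3%nat 3%nat * c 3%nat 1%nat + c 3%nat 2%nat * c 3%nat 0%nat
           + c 2%nat 3%nat * c 2%nat 1%nat + c 2%nat 2%nat * c 2%nat 0%nat
           + c 1%nat 3%nat * c 1%nat 1%nat + c 1%nat 2%nat * c 1%nat 0%nat
           + c 0%nat 3%nat * c 0%nat 1%nat + c 0%nat 2%nat * c 0%nat 0%nat = 0.

Definition remaining (c : nat -> nat -> R) : Prop :=
  c 0%nat 0%nat = - c 3%nat 1%nat - 2 * c 3%nat 3%nat - c 1%nat 3%nat + c 2%nat 2%nat /\
  c 0%nat 1%nat = - c 3%nat 1%nat - 2 * c 3%nat 3%nat + 1/2 + c 2%nat 3%nat - c 1%nat 3%nat /\
  c 0%nat 2%nat = c 1%nat 3%nat + c 3%nat 3%nat + 1/2 - c 2%nat 2%nat /\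
  c 0%nat 3%nat = c 3%nat 3%nat - c 2%nat 3%nat + c 1%nat 3%nat /\
  c 1%nat 0%nat = - c 3%nat 1%nat - 2 * c 3%nat 3%nat + c 3%nat 2%nat - c 1%nat 3%nat + 1/2 /\
  c 1%nat 1%nat = 1 - c 1%nat 3%nat - c 3%nat 1%nat - c 3%nat 3%nat /\
  c 1%nat 2%nat = - c 3%nat 2%nat + c 1%nat 3%nat + c 3%nat 3%nat + 1/2 /\
  c 2%nat 0%nat = c 3%nat 1%nat + c 3%nat 3%nat - c 2%nat 2%nat + 1/2 /\
  c 2%nat 1%nat = c 3%nat 1%nat + c 3%nat 3%nat + 1/2 - c 2%nat 3%nat /\
  c 3%nat 0%nat = c 3%nat 1%nat + c 3%nat 3%nat - c 3%nat 2%nat.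

Definition typeA (c : nat -> nat -> R) (p q mu sigma D : R) : Prop :=
  0 <= D /\
  c 2%nat 3%nat = 1/4 + 2 * mu - 1/2 * (p + q) + sigma / 8 * sqrt D /\
  c 2%nat 2%nat = 3/4 + 4 * mu - p - q - c 2%nat 3%nat /\
  c 3%nat 1%nat = mu - q /\
  c 1%nat 3%nat = c 3%nat 1%nat.

Definition typeB (c : nat -> nat -> R) (p q mu sigma : R) : Prop :=
  0 <= Delta3 p q /\
  c 2%nat 3%nat = - 1/2 * (p + q) + sigma / 8 * sqrt (Delta3 p q) /\
  c 2%nat 2%nat = 1/4 - p - q - c 2%nat 3%nat /\
  c 3%nat 1%nat = mu - q /\
  c 1%nat 3%nat = 1/2 - 2 * q - c 3%nat 1%nat.

(* The linear equations (E0), (R1)-(R9) express ten entries as affine functions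
   of the six entries c13, c22, c23, c31, c32, c33; this is [remaining].  After
   this substitution, suitable linear combinations of (O1)-(O4) say that
   c33 + c13 is a root of 8 x^2 - 4 x - 1 (whose roots are mu1 and mu2), that
   (c31 - c13) (c31 + c13 + 2 c33 - 1/2) = 0 (the two factors give the types A
   and B), that c22 is an affine function of the other entries, and finally a
   quadratic equation in c23 whose discriminant is Delta1, Delta2 or Delta3. *)
From Stdlib Require Import Reals Lra.
Open Scope R_scope.

Definition mu_poly (x : R) : R := 8 * x ^ 2 - 4 * x - 1.

Lemma mu_poly_factor x : mu_poly x = 8 * (x - mu1) * (x - mu2).
Proof.
  assert (H3 : sqrt 3 * sqrt 3 = 3) by (apply sqrt_sqrt; lra).
  unfold mu_poly, mu1, mu2; lra.
Qed.

Lemma mu_poly_eq0 x : mu_poly x = 0 <-> x = mu1 \/ x = mu2.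
Proof.
  rewrite mu_poly_factor; split.
  - intros H; apply Rmult_integral in H as [H | H]; [|right; lra].
    apply Rmult_integral in H as [H | H]; [lra | left; lra].
  - intros [-> | ->]; ring.
Qed.

Lemma mu_poly_half_sub x : mu_poly (1/2 - x) = mu_poly x.
Proof. unfold mu_poly; field. Qed.

(* [4 * mu - 1] is [sqrt 3] for [mu1] and [- sqrt 3] for [mu2]. *)
Definition DeltaA (mu p q : R) : R :=
  -34 - 20 * (4 * mu - 1) + 32 * (4 * mu - 1) * q + 32 * (4 * mu - 1) * p
  - 48 * q ^ 2 + 32 * q - 32 * p * q + 48 * p - 48 * p ^ 2.

Lemma DeltaA_mu1 p q : DeltaA mu1 p q = Delta1 p q.
Proof. unfold DeltaA, Delta1, mu1; field. Qed.

Lemma DeltaA_mu2 p q : DeltaA mu2 p q = Delta2 p q.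
Proof. unfold DeltaA, Delta2, mu2; field. Qed.

Lemma sqr_eq_iff_signed_sqrt x x0 D :
  (8 * (x - x0)) ^ 2 = D <->
  0 <= D /\ exists sigma, (sigma = 1 \/ sigma = -1) /\ x = x0 + sigma / 8 * sqrt D.
Proof.
  split.
  - intros <-; split; [apply pow2_ge_0|].
    destruct (Rle_lt_dec 0 (x - x0)) as [Hx | Hx].
    + exists 1; split; [now left|].
      rewrite sqrt_pow2 by lra; field.
    + exists (-1); split; [now right|].
      replace ((8 * (x - x0)) ^ 2) with ((- (8 * (x - x0))) ^ 2) by ring.
      rewrite sqrt_pow2 by lra; field.
  - intros (HD & sigma & Hsigma & ->).
    replace ((8 * (x0 + sigma / 8 * sqrt D - x0)) ^ 2)
      with (sigma ^ 2 * (sqrt D * sqrt D)) by field.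
    rewrite sqrt_sqrt by exact HD.
    destruct Hsigma as [-> | ->]; ring.
Qed.

Section Solutions.
Variable c : nat -> nat -> R.
Local Notation c13 := (c 1%nat 3%nat).
Local Notation c22 := (c 2%nat 2%nat).
Local Notation c23 := (c 2%nat 3%nat).
Local Notation c31 := (c 3%nat 1%nat).
Local Notation c32 := (c 3%nat 2%nat).
Local Notation c33 := (c 3%nat 3%nat).

Definition reduced_system : Prop :=
  mu_poly (c33 + c13) = 0 /\
  (c31 - c13) * (c31 + c13 + 2 * c33 - 1/2) = 0 /\
  c22 + c23 + c32 + c33 + c31 - c13 + 1/4 = 4 * (c31 + c33) * (c31 + c13 + 2 * c33) /\
  c22 ^ 2 + c23 ^ 2 + c32 ^ 2 + (c23 + c32) / 2
    = (c31 + c13 + 2 * c33) * (c22 + c23 + c32) + c33 * (c31 + c13 + c33 - 1).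

Lemma system_iff_remaining_reduced : system c <-> remaining c /\ reduced_system.
Proof.
  unfold system, reduced_system, mu_poly, sum44; simpl; split.
  - intros (E0 & R1 & R2 & R3 & R4 & R5 & R6 & R7 & R8 & R9 & O1 & O2 & O3 & O4).
    assert (Hrem : remaining c) by (unfold remaining; repeat split; lra).
    split; [exact Hrem|].
    destruct Hrem as (h00 & h01 & h02 & h03 & h10 & h11 & h12 & h20 & h21 & h30).
    rewrite ?h00, ?h01, ?h02, ?h03, ?h10, ?h11, ?h12, ?h20, ?h21, ?h30 in *.
    repeat split; lra.
  - intros [Hrem Hred].
    destruct Hrem as (h00 & h01 & h02 & h03 & h10 & h11 & h12 & h20 & h21 & h30).
    rewrite ?h00, ?h01, ?h02, ?h03, ?h10, ?h11, ?h12, ?h20, ?h21, ?h30.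
    repeat split; lra.
Qed.

Lemma reduced_system_typeA mu :
  mu_poly mu = 0 -> c31 = mu - c33 -> c13 = c31 ->
  reduced_system <->
  c22 = 3/4 + 4 * mu - c32 - c33 - c23 /\
  (8 * (c23 - (1/4 + 2 * mu - 1/2 * (c32 + c33)))) ^ 2 = DeltaA mu c32 c33.
Proof.
  unfold reduced_system, DeltaA, mu_poly; intros Hmu Ha Hd.
  rewrite Hd, Ha; split.
  - intros (_ & _ & Hlin & Hquad).
    assert (He : c22 = 3/4 + 4 * mu - c32 - c33 - c23) by lra.
    split; [exact He|].
    rewrite He in Hquad; lra.
  - intros [He Hsq]; rewrite He in *.
    repeat split; lra.
Qed.

Lemma reduced_system_typeB mu :
  mu_poly mu = 0 -> c31 = mu - c33 -> c13 = 1/2 - 2 * c33 - c31 ->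
  reduced_system <->
  c22 = 1/4 - c32 - c33 - c23 /\
  (8 * (c23 - (- 1/2 * (c32 + c33)))) ^ 2 = Delta3 c32 c33.
Proof.
  unfold reduced_system, Delta3; intros Hmu Ha Hd.
  rewrite Hd, Ha; split.
  - intros (_ & _ & Hlin & Hquad).
    assert (He : c22 = 1/4 - c32 - c33 - c23) by lra.
    split; [exact He|].
    rewrite He in Hquad; lra.
  - intros [He Hsq]; rewrite He in *.
    rewrite <- mu_poly_half_sub in Hmu.
    unfold mu_poly in *; repeat split; lra.
Qed.

Lemma typeA_iff mu : mu_poly mu = 0 ->
  (exists sigma, (sigma = 1 \/ sigma = -1) /\ typeA c c32 c33 mu sigma (DeltaA mu c32 c33))
  <-> reduced_system /\ c31 = mu - c33 /\ c13 = c31.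
Proof.
  intros Hmu; split.
  - intros (sigma & Hsigma & HD & Hf & He & Ha & Hd).
    split; [|split; assumption].
    apply (reduced_system_typeA mu Hmu Ha Hd); split; [exact He|].
    apply sqr_eq_iff_signed_sqrt; eauto.
  - intros (Hred & Ha & Hd).
    apply (reduced_system_typeA mu Hmu Ha Hd) in Hred as [He Hsq].
    apply sqr_eq_iff_signed_sqrt in Hsq as (HD & sigma & Hsigma & Hf).
    exists sigma; split; [exact Hsigma|].
    unfold typeA; repeat split; assumption.
Qed.

Lemma typeB_iff mu : mu_poly mu = 0 ->
  (exists sigma, (sigma = 1 \/ sigma = -1) /\ typeB c c32 c33 mu sigma)
  <-> reduced_system /\ c31 = mu - c33 /\ c13 = 1/2 - 2 * c33 - c31.
Proof.
  intros Hmu; split.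
  - intros (sigma & Hsigma & HD & Hf & He & Ha & Hd).
    split; [|split; assumption].
    apply (reduced_system_typeB mu Hmu Ha Hd); split; [exact He|].
    apply sqr_eq_iff_signed_sqrt; eauto.
  - intros (Hred & Ha & Hd).
    apply (reduced_system_typeB mu Hmu Ha Hd) in Hred as [He Hsq].
    apply sqr_eq_iff_signed_sqrt in Hsq as (HD & sigma & Hsigma & Hf).
    exists sigma; split; [exact Hsigma|].
    unfold typeB; repeat split; assumption.
Qed.

Lemma reduced_system_iff_types :
  reduced_system <->
  exists mu sigma,
    (mu = mu1 \/ mu = mu2) /\ (sigma = 1 \/ sigma = -1) /\
    (((mu = mu1 /\ typeA c c32 c33 mu sigma (Delta1 c32 c33)) \/
      (mu = mu2 /\ typeA c c32 c33 mu sigma (Delta2 c32 c33))) \/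
     typeB c c32 c33 mu sigma).
Proof.
  split.
  - intros Hred; pose proof Hred as (Hroot & Htype & _).
    apply Rmult_integral in Htype as [Hd | Hd].
    + destruct (proj2 (typeA_iff _ Hroot)) as (sigma & Hsigma & HA); [split; [exact Hred | lra]|].
      exists (c33 + c13), sigma; split; [now apply mu_poly_eq0|]; split; [exact Hsigma|].
      apply mu_poly_eq0 in Hroot as [Hm | Hm]; rewrite Hm in HA |- *; left.
      * left; rewrite <- DeltaA_mu1; auto.
      * right; rewrite <- DeltaA_mu2; auto.
    + assert (HrootB : mu_poly (c31 + c33) = 0).
      { rewrite <- mu_poly_half_sub; replace (1/2 - (c31 + c33)) with (c33 + c13) by lra.
        exact Hroot. }
      destruct (proj2 (typeB_iff _ HrootB)) as (sigma & Hsigma & HB); [split; [exact Hred | split; lra]|].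
      exists (c31 + c33), sigma; split; [now apply mu_poly_eq0|]; auto.
  - intros (mu & sigma & Hmu & Hsigma & HT).
    assert (Hroot : mu_poly mu = 0) by now apply mu_poly_eq0.
    destruct HT as [[[-> HA] | [-> HA]] | HB].
    + rewrite <- DeltaA_mu1 in HA; apply (typeA_iff mu1 Hroot); eauto.
    + rewrite <- DeltaA_mu2 in HA; apply (typeA_iff mu2 Hroot); eauto.
    + apply (typeB_iff mu Hroot); eauto.
Qed.
End Solutions.

Theorem mainTheorem9 (c : nat -> nat -> R) :
  system c <->
  exists p q mu sigma : R,
    p = c 3%nat 2%nat /\ q = c 3%nat 3%nat /\
    (mu = mu1 \/ mu = mu2) /\ (sigma = 1 \/ sigma = -1) /\
    ( (* type A, with Delta = Delta1 if mu = mu1 and Delta2 if mu = mu2 *)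
      ((mu = mu1 /\ typeA c p q mu sigma (Delta1 p q)) \/
       (mu = mu2 /\ typeA c p q mu sigma (Delta2 p q)))
      \/ (* type B *)
      typeB c p q mu sigma ) /\
    remaining c.
Proof.
  rewrite system_iff_remaining_reduced, reduced_system_iff_types; split.
  - intros [Hrem (mu & sigma & Hmu & Hsigma & HT)].
    exists (c 3%nat 2%nat), (c 3%nat 3%nat), mu, sigma; tauto.
  - intros (p & q & mu & sigma & -> & -> & Hmu & Hsigma & HT & Hrem).
    split; [exact Hrem|]; eauto 6.
Qed.
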